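(* Let $(\Gamma,\rho)$ be a rooted voltage graph with finite voltage group $G$, let $V_r$ be the set of roots of $\Gamma$, and let $(\Gamma_r,\rho_r)$ be the voltage graph induced by $V_r$ (i.e. $\Gamma_r$ is the subgraph of $\Gamma$ induced by $V_r$ and $\rho_r$ the restriction of $\rho$ to its edges). Then for every $v_i\in V_r$, the local group of $(\Gamma_r,\rho_r)$ at $v_i$ equals the directed local group $G_i^*$ of $(\Gamma,\rho)$ at $v_i$.
   Context: $\Gamma=(V,E)$ simple digraph, $e_{ij}$ the edge $v_i\to v_j$, $\rho:E\to G$. Semi-walk $w=v_{i_1}a_1\dots a_{n-1}v_{i_n}$ with each $a_j\in\{e_{i_ji_{j+1}},e_{i_{j+1}i_j}\}$; walk if all $a_j=e_{i_ji_{j+1}}$; closed if $v_{i_1}=v_{i_n}$; path: walk with distinct vertices. Net voltage $f(w)=\bar\rho(a_1)\cdots\bar\rho(a_{n-1})$ with $\bar\rho(a_j)=\rho(a_j)$ for forward and $\rho(a_j)^{-1}$ for backward edges ($f=\mathbf 1$ on a single vertex). The local group of a voltage graph at $v_i$ is $\{f(w): w$ closed semi-walk at $v_i$ in that graph$\}$; the directed local group $G_i^*$ of $(\Gamma,\rho)$ is $\{f(w): w$ closed walk in $\Gamma$ at $v_i\}$. A root of $\Gamma$ is a vertex reachable by a path from every vertex; $\Gamma$ is rooted if it has a root. The induced subgraph on $V_r$ contains exactly the edges of $\Gamma$ between vertices of $V_r$. *)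

From Stdlib Require Import ClassicalEpsilon.
From mathcomp Require Import all_boot all_fingroup.
Set Implicit Arguments. Unset Strict Implicit. Unset Printing Implicit Defensive.
Local Open Scope group_scope.

(* A digraph on a finite vertex type V is an edge relation E : rel V;
   E x y means the edge e_{xy} : x -> y is present.  In a simple digraph
   there is at most one edge x -> y, so an edge is determined by its ends.
   A voltage assignment is rho : V -> V -> gT (only its values on edges
   matter).

   A semi-walk starting at x is encoded by its sequence of steps
   (y, b) : V * bool, where y is the next vertex and b = true means the
   step traverses the forward edge e_{cur,y}, b = false means it traverses
   the edge e_{y,cur} backwards. *)

Section VoltageGraphs.
Variables (V : finType) (gT : finGroupType).

Fixpoint semiwalk (E : rel V) (x : V) (s : seq (V * bool)) : bool :=
  match s with
  | [::] => true
  | (y, b) :: s' => (if b then E x y else E y x) && semiwalk E y s'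
  end.

Fixpoint net_voltage (rho : V -> V -> gT) (x : V) (s : seq (V * bool)) : gT :=
  match s with
  | [::] => 1
  | (y, b) :: s' => (if b then rho x y else (rho y x)^-1) * net_voltage rho y s'
  end.

Definition sw_end (x : V) (s : seq (V * bool)) : V := last x (map fst s).

Definition is_walk (E : rel V) (x : V) (s : seq (V * bool)) : bool :=
  semiwalk E x s && all snd s.

Definition local_group (E : rel V) (rho : V -> V -> gT) (v : V) (g : gT) : Prop :=
  exists s, [/\ semiwalk E v s, sw_end v s = v & net_voltage rho v s = g].

Definition directed_local_group (E : rel V) (rho : V -> V -> gT) (v : V) (g : gT)
  : Prop :=
  exists s, [/\ is_walk E v s, sw_end v s = v & net_voltage rho v s = g].

Definition path_to (E : rel V) (x r : V) : Prop :=
  exists p : seq V, [/\ path E x p, last x p = r & uniq (x :: p)].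

Definition is_root (E : rel V) (r : V) : Prop := forall x, path_to E x r.

Definition rooted (E : rel V) : Prop := exists r, is_root E r.

Definition root_set (E : rel V) : pred V := fun r =>
  if excluded_middle_informative (is_root E r) then true else false.
Definition induced (E : rel V) (A : pred V) : rel V :=
  fun x y => [&& E x y, A x & A y].

End VoltageGraphs.

From Stdlib Require Import ClassicalEpsilon.
From mathcomp Require Import all_boot all_fingroup.
Set Implicit Arguments. Unset Strict Implicit. Unset Printing Implicit Defensive.

(* Roots are closed under forward edges, so every walk from a root is a
   semi-walk of the induced graph. Conversely, a backward edge y -> x between
   roots can be simulated by forward walks: since y is a root there is a walk
   x ->* y of voltage p, closing it with y -> x gives a closed walk at x of
   voltage c = p * rho y x, and in the finite group G the inverse c^-1 = c^(#[c]-1)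
   is again the voltage of a closed walk; followed by x ->* y this has voltage
   (rho y x)^-1. *)

Local Open Scope group_scope.

Section SemiWalks.
Variables (V : finType) (gT : finGroupType) (E : rel V) (rho : V -> V -> gT).

Lemma semiwalk_cat x s1 s2 :
  semiwalk E x (s1 ++ s2) = semiwalk E x s1 && semiwalk E (sw_end x s1) s2.
Proof. by rewrite /sw_end; elim: s1 x => [|[y b] s1 IH] x //=; rewrite IH andbA. Qed.

Lemma is_walk_cat x s1 s2 :
  is_walk E x (s1 ++ s2) = is_walk E x s1 && is_walk E (sw_end x s1) s2.
Proof. by rewrite /is_walk semiwalk_cat all_cat andbACA. Qed.

Lemma sw_end_cat (x : V) s1 s2 : sw_end x (s1 ++ s2) = sw_end (sw_end x s1) s2.
Proof. by rewrite /sw_end map_cat last_cat. Qed.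

Lemma net_voltage_cat x s1 s2 :
  net_voltage rho x (s1 ++ s2) = net_voltage rho x s1 * net_voltage rho (sw_end x s1) s2.
Proof.
rewrite /sw_end; elim: s1 x => [|[y b] s1 IH] x /=; first by rewrite mul1g.
by rewrite IH mulgA.
Qed.

Definition walk_voltage (x y : V) (g : gT) : Prop :=
  exists s, [/\ is_walk E x s, sw_end x s = y & net_voltage rho x s = g].

Lemma walk_voltage_nil x : walk_voltage x x 1.
Proof. by exists [::]. Qed.

Lemma walk_voltage_edge x y : E x y -> walk_voltage x y (rho x y).
Proof. by move=> Exy; exists [:: (y, true)]; rewrite /is_walk /= Exy mulg1. Qed.

Lemma walk_voltage_cat x y z g h :
  walk_voltage x y g -> walk_voltage y z h -> walk_voltage x z (g * h).
Proof.
move=> [s [ws <- <-]] [t [wt <- <-]]; exists (s ++ t).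
by rewrite is_walk_cat ws wt sw_end_cat net_voltage_cat.
Qed.

Lemma walk_voltage_connect x y : connect E x y -> exists g, walk_voltage x y g.
Proof.
move=> /connectP[p pxp ->]; elim: p x pxp => [|z p IH] x /=.
  by exists 1; apply: walk_voltage_nil.
move=> /andP[Exz /IH[g wg]]; exists (rho x z * g).
exact: walk_voltage_cat (walk_voltage_edge Exz) wg.
Qed.

Lemma walk_voltage_expg x c n : walk_voltage x x c -> walk_voltage x x (c ^+ n).
Proof.
move=> wc; elim: n => [|n IH]; first exact: walk_voltage_nil.
by rewrite expgS; apply: walk_voltage_cat wc IH.
Qed.

Lemma walk_voltage_invg x c : walk_voltage x x c -> walk_voltage x x c^-1.
Proof. by rewrite invg_expg; apply: walk_voltage_expg. Qed.

Lemma walk_voltage_backward_edge x y :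
  E y x -> connect E x y -> walk_voltage x y (rho y x)^-1.
Proof.
move=> Eyx /walk_voltage_connect[p wp].
have wc : walk_voltage x x (p * rho y x) := walk_voltage_cat wp (walk_voltage_edge Eyx).
have := walk_voltage_cat (walk_voltage_invg wc) wp.
by rewrite invMg -mulgA mulVg mulg1.
Qed.

End SemiWalks.

Section Roots.
Variables (V : finType) (E : rel V).

Lemma root_setP r : reflect (is_root E r) (root_set E r).
Proof. by rewrite /root_set; case: excluded_middle_informative => ?; constructor. Qed.

Lemma path_toP x r : reflect (path_to E x r) (connect E x r).
Proof.
apply: (iffP connectP) => [[p pxp ->] | [p [pxp <- _]]]; last by exists p.
by case: (shortenP pxp) => q pxq uq _; exists q.
Qed.

Lemma is_root_connect r u : is_root E r -> connect E r u -> is_root E u.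
Proof. by move=> Rr cru x; apply/path_toP/(connect_trans _ cru)/path_toP. Qed.

Lemma walk_from_root_induced x s :
  is_root E x -> is_walk E x s -> semiwalk (induced E (root_set E)) x s.
Proof.
rewrite /is_walk; elim: s x => [|[y b] s IH] x //= Rx.
case: b => /andP[/andP[Exy ws] /andP[//= _ fws]].
have Ry : is_root E y := is_root_connect Rx (connect1 Exy).
have -> : semiwalk (induced E (root_set E)) y s by apply: IH; rewrite ?ws.
by rewrite /induced Exy andbT /=; apply/andP; split; apply/root_setP.
Qed.

Lemma induced_semiwalk_voltage (gT : finGroupType) (rho : V -> V -> gT) x s :
  semiwalk (induced E (root_set E)) x s ->
  walk_voltage E rho x (sw_end x s) (net_voltage rho x s).
Proof.
rewrite /sw_end; elim: s x => [|[y b] s IH] x /=; first by move=> _; apply: walk_voltage_nil.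
move=> /andP[exy /IH wys]; apply: walk_voltage_cat wys.
case: b exy => [/and3P[Exy _ _] | /and3P[Eyx /root_setP Ry _]].
  exact: walk_voltage_edge.
by apply: walk_voltage_backward_edge => //; exact/path_toP.
Qed.

End Roots.

Theorem lemma8 (V : finType) (gT : finGroupType) (E : rel V)
  (rho : V -> V -> gT) :
  irreflexive E ->
  rooted E ->
  forall v : V, is_root E v ->
  forall g : gT,
    local_group (induced E (root_set E)) rho v g <-> directed_local_group E rho v g.
Proof.
move=> _ _ v Rv g; split.
  by move=> [s [ws sv <-]]; have := induced_semiwalk_voltage rho ws; rewrite sv.
move=> [s [ws sv gs]]; exists s; split=> //.
exact: walk_from_root_induced.
Qed.
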